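(* Let $G$ be a generator matrix on the discrete space $\mathcal X$, let $\theta>0$ and let $M\ge1$ be an integer such that $Q:=I+G/\theta$ and $I+G/M$ are entrywise non-negative. Let $K_n=I+\frac Gn\mathbb 1(n>M)$ for $n\ge1$. Let $\pi$ be a probability vector and $\mu$ a stationary distribution of $Q$ such that $\pi^tQ^n\to\mu^t$ entrywise. Then, with $(\mu^n)^t:=\pi^t\prod_{i=1}^nK_i$, as $n\to\infty$ both (a) $(\mu^n)^t\to\mu^t$ and (b) $(\mu^n)^tQ\to\mu^t$ hold entrywise.
   Context: A generator matrix on $\mathcal X$: $G_{i,j}\ge0$ for $i\ne j$, $G_{i,i}=-\sum_{j\ne i}G_{i,j}$, and $\sup_i|G_{i,i}|<\infty$. *)

From Stdlib Require Import Reals ClassicalEpsilon.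
Open Scope R_scope.

(* The discrete (countable, finite or infinite) state space X is described
   by an enumeration e : nat -> option X hitting every state exactly once. *)
Definition is_enum {X : Type} (e : nat -> option X) : Prop :=
  (forall x, exists n, e n = Some x) /\
  (forall n m x, e n = Some x -> e m = Some x -> n = m).

Definition lift {X : Type} (e : nat -> option X) (f : X -> R) (n : nat) : R :=
  match e n with Some x => f x | None => 0 end.

(* Sum over X of f (the limit of the series along the enumeration; used only
   for series of nonnegative terms in the statement). *)
Definition xsum {X : Type} (e : nat -> option X) (f : X -> R) : R :=
  epsilon (inhabits 0) (fun l => infinite_sum (lift e f) l).

Definition idm {X : Type} (eq_dec : forall x y : X, {x = y} + {x <> y})
  (x y : X) : R := if eq_dec x y then 1 else 0.

Definition vecmat {X : Type} (e : nat -> option X) (v : X -> R)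
  (A : X -> X -> R) : X -> R :=
  fun y => xsum e (fun x => v x * A x y).

Fixpoint vpow {X : Type} (e : nat -> option X) (v : X -> R)
  (A : X -> X -> R) (n : nat) : X -> R :=
  match n with
  | O => v
  | S k => vecmat e (vpow e v A k) A
  end.

Fixpoint vprod {X : Type} (e : nat -> option X) (v : X -> R)
  (K : nat -> X -> X -> R) (n : nat) : X -> R :=
  match n with
  | O => v
  | S k => vecmat e (vprod e v K k) (K (S k))
  end.

Definition is_generator {X : Type} (e : nat -> option X)
  (eq_dec : forall x y : X, {x = y} + {x <> y}) (G : X -> X -> R) : Prop :=
  (forall x y, x <> y -> 0 <= G x y) /\
  (forall x, infinite_sum (lift e (fun y => if eq_dec x y then 0 else G x y))
                          (- G x x)) /\
  (exists B, forall x, Rabs (G x x) <= B).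

Definition is_prob_vector {X : Type} (e : nat -> option X) (p : X -> R) : Prop :=
  (forall x, 0 <= p x) /\ infinite_sum (lift e p) 1.

Definition is_stationary {X : Type} (e : nat -> option X) (A : X -> X -> R)
  (m : X -> R) : Prop :=
  is_prob_vector e m /\ (forall y, vecmat e m A y = m y).

Definition Kmat {X : Type} (eq_dec : forall x y : X, {x = y} + {x <> y})
  (G : X -> X -> R) (M : nat) (n : nat) : X -> X -> R :=
  fun x y => idm eq_dec x y + (if Nat.ltb M n then G x y / INR n else 0).

From Stdlib Require Import Reals Lra Lia Psatz ClassicalEpsilon FunctionalExtensionality.
Open Scope R_scope.

(** Put  Q = I + G/theta  and  a_n = theta/n  for n > M,  a_n = 0  otherwise.
  Then every factor is  K_n = (1 - a_n) I + a_n Q,  so by induction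
      pi^t K_1 ... K_n = sum_(k <= n) w_n(k) pi^t Q^k,
  where  w_n(k) = (1 - a_n) w_(n-1)(k) + a_n w_(n-1)(k-1)  ([vprod_mixture]).
  The rows of this triangular array of weights sum to one, have bounded l^1
  norms (a_n lies in [0, 1] for large n), and every column tends to zero,
  because the recursion above contracts with steps a_n whose sum diverges
  (harmonic series).  A Toeplitz summation lemma therefore transfers the
  hypothesis  pi^t Q^k -> mu^t  to the mixtures, which is (a); applied to
  pi^t Q^(k+1) it gives (b).
*)

Fixpoint fsum (f : nat -> R) (n : nat) : R :=
  match n with O => 0 | S k => fsum f k + f k end.

Lemma fsum_S f n : fsum f (S n) = fsum f n + f n.
Proof. reflexivity. Qed.

Lemma fsum_ext f g n : (forall k, (k < n)%nat -> f k = g k) -> fsum f n = fsum g n.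
Proof.
  induction n as [|n IH]; intros Hfg; simpl; [reflexivity|].
  rewrite IH, Hfg; [reflexivity | lia | intros k Hk; apply Hfg; lia].
Qed.

Lemma fsum_lin a b f g n :
  fsum (fun k => a * f k + b * g k) n = a * fsum f n + b * fsum g n.
Proof. induction n as [|n IH]; simpl; [ring | rewrite IH; ring]. Qed.

Lemma fsum_shift f n : fsum f (S n) = f O + fsum (fun k => f (S k)) n.
Proof.
  induction n as [|n IH]; [simpl; ring|].
  rewrite fsum_S, IH; simpl; ring.
Qed.

Lemma fsum_zero f n : (forall k, f k = 0) -> fsum f n = 0.
Proof. intros Hf; induction n as [|n IH]; simpl; [|rewrite IH, Hf]; ring. Qed.

Lemma fsum_le f g n : (forall k, f k <= g k) -> fsum f n <= fsum g n.
Proof. intros Hfg; induction n as [|n IH]; simpl; [lra | specialize (Hfg n); lra]. Qed.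

Lemma fsum_nonneg f n : (forall k, 0 <= f k) -> 0 <= fsum f n.
Proof. intros Hf; rewrite <- (fsum_zero (fun _ => 0) n) by reflexivity; apply fsum_le, Hf. Qed.

Lemma fsum_mono f n m : (forall k, 0 <= f k) -> (n <= m)%nat -> fsum f n <= fsum f m.
Proof. intros Hf Hnm; induction Hnm as [|m _ IH]; simpl; [lra | specialize (Hf m); lra]. Qed.

Lemma fsum_le_term f k n : (forall j, 0 <= f j) -> (k < n)%nat -> f k <= fsum f n.
Proof.
  intros Hf Hk; eapply Rle_trans; [|apply (fsum_mono f (S k) n Hf Hk)].
  simpl; pose proof (fsum_nonneg f k Hf); lra.
Qed.

Lemma fsum_abs f n : Rabs (fsum f n) <= fsum (fun k => Rabs (f k)) n.
Proof.
  induction n as [|n IH]; simpl; [rewrite Rabs_R0; lra|].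
  eapply Rle_trans; [apply Rabs_triang | lra].
Qed.

Lemma fsum_trunc_le f K n : (forall k, 0 <= f k) ->
  fsum (fun k => if Nat.ltb k K then f k else 0) n <= fsum f K.
Proof.
  intros Hf; induction n as [|n IH]; simpl; [apply fsum_nonneg, Hf|].
  destruct (Nat.ltb_spec n K) as [HnK|HnK]; [|lra].
  rewrite (fsum_ext _ f n) by (intros k Hk; destruct (Nat.ltb_spec k K); [reflexivity | lia]).
  apply (fsum_mono f (S n) K Hf HnK).
Qed.

Lemma fsum_cv0 (W : nat -> nat -> R) K :
  (forall k, Un_cv (fun n => W n k) 0) -> Un_cv (fun n => fsum (W n) K) 0.
Proof.
  intros HW; induction K as [|K IH]; simpl.
  - intros eps Heps; exists O; intros n _; unfold Rdist; rewrite Rminus_0_r, Rabs_R0; lra.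
  - rewrite <- (Rplus_0_r 0); apply CV_plus; auto.
Qed.

Lemma toeplitz_null (W : nat -> nat -> R) (C : R) (t : nat -> R) :
  (forall n, fsum (fun k => Rabs (W n k)) (S n) <= C) ->
  (forall k, Un_cv (fun n => W n k) 0) ->
  Un_cv t 0 -> Un_cv (fun n => fsum (fun k => W n k * t k) (S n)) 0.
Proof.
  intros Hrow Hcol Ht eps Heps.
  destruct (maj_by_pos t (exist _ 0 Ht)) as [D [HD Ht_bound]].
  assert (HC : 0 <= C).
  { eapply Rle_trans; [apply fsum_nonneg; intros; apply Rabs_pos | apply (Hrow O)]. }
  (* far columns are controlled by the smallness of [t], near ones by [W] *)
  set (e1 := eps / (2 * (C + 1))); set (e2 := eps / (2 * D)).
  assert (He1 : 0 < e1) by (unfold e1; apply Rdiv_lt_0_compat; lra).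
  destruct (Ht e1 He1) as [K HK].
  assert (Hnear : Un_cv (fun n => fsum (fun k => Rabs (W n k)) K) 0).
  { apply fsum_cv0; intros k e He; destruct (Hcol k e He) as [N HN].
    exists N; intros n Hn; specialize (HN n Hn); unfold Rdist in *.
    rewrite Rminus_0_r, Rabs_Rabsolu in *; exact HN. }
  destruct (Hnear e2 ltac:(unfold e2; apply Rdiv_lt_0_compat; lra)) as [N HN].
  exists N; intros n Hn; specialize (HN n Hn); unfold Rdist in *; rewrite Rminus_0_r in *.
  rewrite Rabs_right in HN by (apply Rle_ge, fsum_nonneg; intros; apply Rabs_pos).
  assert (Hterm : forall k, Rabs (W n k * t k) <=
            e1 * Rabs (W n k) + D * (if Nat.ltb k K then Rabs (W n k) else 0)).
  { intros k; rewrite Rabs_mult; pose proof (Rabs_pos (W n k)) as HW.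
    destruct (Nat.ltb_spec k K) as [Hk|Hk].
    - specialize (Ht_bound k); nra.
    - specialize (HK k Hk); unfold Rdist in HK; rewrite Rminus_0_r in HK; nra. }
  eapply Rle_lt_trans; [apply fsum_abs|].
  eapply Rle_lt_trans; [apply (fsum_le _ _ _ Hterm)|]; rewrite fsum_lin.
  pose proof (fsum_trunc_le (fun k => Rabs (W n k)) K (S n) (fun k => Rabs_pos _)).
  assert (e1 * C <= eps / 2).
  { unfold e1; apply (Rmult_le_reg_r (2 * (C + 1))); [lra|]; field_simplify; nra. }
  assert (D * e2 = eps / 2) by (unfold e2; field; lra).
  assert (e1 * fsum (fun k => Rabs (W n k)) (S n) <= e1 * C)
    by (apply Rmult_le_compat_l; [lra | auto]).
  nra.
Qed.

Lemma toeplitz (W : nat -> nat -> R) (C : R) (s : nat -> R) (L : R) :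
  (forall n, fsum (W n) (S n) = 1) ->
  (forall n, fsum (fun k => Rabs (W n k)) (S n) <= C) ->
  (forall k, Un_cv (fun n => W n k) 0) ->
  Un_cv s L -> Un_cv (fun n => fsum (fun k => W n k * s k) (S n)) L.
Proof.
  intros Hsum Hrow Hcol Hs eps Heps.
  assert (Hs0 : Un_cv (fun k => s k - L) 0).
  { intros e He; destruct (Hs e He) as [N HN]; exists N; intros n Hn.
    unfold Rdist; rewrite Rminus_0_r; apply HN, Hn. }
  destruct (toeplitz_null W C _ Hrow Hcol Hs0 eps Heps) as [N HN].
  exists N; intros n Hn; specialize (HN n Hn); unfold Rdist in *.
  replace (fsum (fun k => W n k * s k) (S n) - L)
    with (fsum (fun k => W n k * (s k - L)) (S n) - 0); [exact HN|].
  rewrite (fsum_ext _ (fun k => 1 * (W n k * s k) + (- L) * W n k))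
    by (intros; ring).
  rewrite fsum_lin, Hsum; ring.
Qed.

Section Contraction.
Variables (b : nat -> R) (N0 : nat).
Hypothesis b_unit : forall n, (N0 <= n)%nat -> 0 <= b n <= 1.
Hypothesis b_divergent :
  forall N, (N0 <= N)%nat -> forall B, exists m, B <= fsum (fun j => b (N + j)%nat) m.

Lemma contraction_bound (y : nat -> R) N :
  (N0 <= N)%nat -> (forall n, 0 <= y n) ->
  (forall n, (N <= n)%nat -> y (S n) <= (1 - b n) * y n) ->
  forall m, y (N + m)%nat * (1 + fsum (fun j => b (N + j)%nat) m) <= y N.
Proof.
  intros HN Hy Hstep m; induction m as [|m IH]; [rewrite Nat.add_0_r; simpl; lra|].
  replace (N + S m)%nat with (S (N + m)) by lia; rewrite fsum_S.
  set (S0 := fsum (fun j => b (N + j)%nat) m) in *.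
  assert (HS0 : 0 <= S0) by (apply fsum_nonneg; intros; apply b_unit; lia).
  specialize (Hstep (N + m)%nat ltac:(lia)); specialize (b_unit (N + m)%nat ltac:(lia)).
  pose proof (Hy (N + m)%nat); pose proof (Hy (S (N + m))).
  set (bb := b (N + m)%nat) in *.
  assert (y (S (N + m)) * (1 + (S0 + bb)) <= y (N + m)%nat * ((1 - bb) * (1 + (S0 + bb))))
    by (rewrite <- Rmult_assoc, (Rmult_comm _ (1 - bb)); apply Rmult_le_compat_r; lra).
  assert (Hfactor : (1 - bb) * (1 + (S0 + bb)) <= 1 + S0) by nra.
  assert (y (N + m)%nat * ((1 - bb) * (1 + (S0 + bb))) <= y (N + m)%nat * (1 + S0))
    by (apply Rmult_le_compat_l; lra).
  lra.
Qed.

Lemma contraction_vanishes (y : nat -> R) N :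
  (N0 <= N)%nat -> (forall n, 0 <= y n) ->
  (forall n, (N <= n)%nat -> y (S n) <= (1 - b n) * y n) ->
  forall eps, 0 < eps -> exists n0, forall n, (n0 <= n)%nat -> y n < eps.
Proof.
  intros HN Hy Hstep eps Heps.
  destruct (b_divergent N HN (y N / eps)) as [m0 Hm0].
  exists (N + m0)%nat; intros n Hn.
  pose proof (contraction_bound y N HN Hy Hstep (n - N)) as Hbound.
  replace (N + (n - N))%nat with n in Hbound by lia.
  assert (Hmono : fsum (fun j => b (N + j)%nat) m0 <= fsum (fun j => b (N + j)%nat) (n - N))
    by (apply fsum_mono; [intros; apply b_unit; lia | lia]).
  set (Sn := fsum (fun j => b (N + j)%nat) (n - N)) in *.
  assert (Hyeps : y N <= eps * Sn).
  { assert (y N = eps * (y N / eps)) by (field; lra); nra. }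
  pose proof (Hy n); pose proof (Hy N); nra.
Qed.

Lemma averaging_vanishes (x ep : nat -> R) :
  (forall n, (N0 <= n)%nat -> x (S n) = (1 - b n) * x n + b n * ep n) ->
  Un_cv ep 0 -> Un_cv x 0.
Proof.
  intros Hx Hep eps Heps.
  destruct (Hep (eps / 2) ltac:(lra)) as [N1 HN1].
  (* the excess of |x n| over eps/2 contracts from N = max N0 N1 on *)
  set (N := Nat.max N0 N1).
  set (y := fun n => Rmax (Rabs (x n) - eps / 2) 0).
  assert (Hy : forall n, 0 <= y n) by (intros; apply Rmax_r).
  assert (Hstep : forall n, (N <= n)%nat -> y (S n) <= (1 - b n) * y n).
  { intros n Hn; specialize (b_unit n ltac:(lia)); specialize (HN1 n ltac:(lia)).
    unfold Rdist in HN1; rewrite Rminus_0_r in HN1.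
    unfold y; rewrite Hx by lia.
    pose proof (Rmax_l (Rabs (x n) - eps / 2) 0); pose proof (Rmax_r (Rabs (x n) - eps / 2) 0).
    apply Rmax_lub; [|nra].
    pose proof (Rabs_triang ((1 - b n) * x n) (b n * ep n)) as Htri.
    rewrite !Rabs_mult, (Rabs_right (1 - b n)), (Rabs_right (b n)) in Htri by lra.
    nra. }
  destruct (contraction_vanishes y N ltac:(lia) Hy Hstep (eps / 2) ltac:(lra)) as [n0 Hn0].
  exists n0; intros n Hn; specialize (Hn0 n Hn); unfold Rdist; rewrite Rminus_0_r.
  unfold y in Hn0; pose proof (Rmax_l (Rabs (x n) - eps / 2) 0); lra.
Qed.

End Contraction.

Lemma eventually_nonincreasing_bound (c : nat -> R) N0 :
  (forall n, 0 <= c n) -> (forall n, (N0 <= n)%nat -> c (S n) <= c n) ->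
  forall n, c n <= fsum c (S N0).
Proof.
  intros Hc0 Hdec n.
  assert (HN0 : c N0 <= fsum c (S N0)) by (apply fsum_le_term; auto).
  destruct (Nat.le_gt_cases n N0) as [Hn|Hn]; [apply fsum_le_term; auto; lia|].
  assert (Hdesc : forall m, c (N0 + m)%nat <= c N0).
  { induction m as [|m IH]; [rewrite Nat.add_0_r; lra|].
    replace (N0 + S m)%nat with (S (N0 + m)) by lia.
    specialize (Hdec (N0 + m)%nat ltac:(lia)); lra. }
  specialize (Hdesc (n - N0)%nat); replace (N0 + (n - N0))%nat with n in Hdesc by lia.
  lra.
Qed.

(** Mixing weights: [wgt a n k] is the weight of [v^t P^k] in
    [v^t ((1 - a 1) I + a 1 P) ... ((1 - a n) I + a n P)]. *)
Fixpoint wgt (a : nat -> R) (n k : nat) : R :=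
  match n with
  | O => match k with O => 1 | S _ => 0 end
  | S m => (1 - a (S m)) * wgt a m k + a (S m) * match k with O => 0 | S j => wgt a m j end
  end.

Section Weights.
Variable a : nat -> R.

Lemma wgt_beyond n k : (n < k)%nat -> wgt a n k = 0.
Proof.
  revert k; induction n as [|n IH]; intros k Hk; [destruct k; [lia | reflexivity]|].
  simpl; rewrite IH by lia; destruct k as [|j]; [lia|]; rewrite IH by lia; ring.
Qed.

Lemma fsum_wgt_S (f : nat -> R) n :
  fsum (fun k => wgt a (S n) k * f k) (S (S n)) =
  (1 - a (S n)) * fsum (fun k => wgt a n k * f k) (S n)
  + a (S n) * fsum (fun k => wgt a n k * f (S k)) (S n).
Proof.
  rewrite (fsum_ext _ (fun k => (1 - a (S n)) * (wgt a n k * f k)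
             + a (S n) * (match k with O => 0 | S j => wgt a n j end * f k)))
    by (intros; simpl; ring).
  rewrite fsum_lin, (fsum_shift (fun k => match k with O => 0 | S j => _ end * f k)).
  rewrite (fsum_S (fun k => wgt a n k * f k) (S n)), (wgt_beyond n (S n)) by lia; ring.
Qed.

Lemma wgt_sum n : fsum (wgt a n) (S n) = 1.
Proof.
  induction n as [|n IH]; [simpl; ring|].
  rewrite (fsum_ext _ (fun k => wgt a (S n) k * 1)) by (intros; ring).
  rewrite fsum_wgt_S, !(fsum_ext (fun k => wgt a n k * 1) (wgt a n)) by (intros; ring).
  rewrite IH; ring.
Qed.

Variable N0 : nat.
Hypothesis a_unit : forall n, (N0 <= n)%nat -> 0 <= a (S n) <= 1.

(* The l^1 norms of the weight rows are bounded: from [N0] on every step is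
   a convex combination, which does not increase the norm. *)
Lemma wgt_l1_bound : exists C, forall n, fsum (fun k => Rabs (wgt a n k)) (S n) <= C.
Proof.
  set (c := fun n => fsum (fun k => Rabs (wgt a n k)) (S n)).
  assert (Hc0 : forall n, 0 <= c n) by (intros; apply fsum_nonneg; intros; apply Rabs_pos).
  assert (Hdec : forall n, (N0 <= n)%nat -> c (S n) <= c n).
  { intros n Hn; specialize (a_unit n Hn); unfold c.
    eapply Rle_trans.
    { apply (fsum_le _ (fun k => (1 - a (S n)) * Rabs (wgt a n k)
               + a (S n) * match k with O => 0 | S j => Rabs (wgt a n j) end)).
      intros k; simpl; eapply Rle_trans; [apply Rabs_triang|].
      rewrite !Rabs_mult, (Rabs_right (1 - a (S n))), (Rabs_right (a (S n))) by lra.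
      destruct k; [rewrite Rabs_R0|]; lra. }
    rewrite fsum_lin, (fsum_shift (fun k => match k with O => 0 | S j => _ end)).
    rewrite (fsum_S (fun k => Rabs (wgt a n k)) (S n)), (wgt_beyond n (S n)), Rabs_R0 by lia.
    lra. }
  exists (fsum c (S N0)); exact (eventually_nonincreasing_bound c N0 Hc0 Hdec).
Qed.

Hypothesis a_divergent :
  forall N, (N0 <= N)%nat -> forall B, exists m, B <= fsum (fun j => a (S (N + j))) m.

Lemma wgt_vanishes k : Un_cv (fun n => wgt a n k) 0.
Proof.
  induction k as [|k IH].
  - apply (averaging_vanishes (fun n => a (S n)) N0 a_unit a_divergent _ (fun _ => 0)).
    + intros n _; simpl; ring.
    + intros eps Heps; exists O; intros; unfold Rdist; rewrite Rminus_0_r, Rabs_R0; lra.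
  - apply (averaging_vanishes (fun n => a (S n)) N0 a_unit a_divergent _ (fun n => wgt a n k));
      [intros n _; reflexivity | exact IH].
Qed.

End Weights.

(* ln (x + 1) - ln x = ln (1 + 1/x) <= 1/x, from 1 + u <= exp u. *)
Lemma ln_succ_le x : 1 <= x -> ln (x + 1) - ln x <= 1 / x.
Proof.
  intros Hx; assert (Hinv : 0 < 1 / x) by (apply Rdiv_lt_0_compat; lra).
  replace (x + 1) with (x * (1 + 1 / x)) by (field; lra).
  rewrite ln_mult by lra.
  pose proof (ln_increasing (1 + 1 / x) (exp (1 / x)) ltac:(lra) (exp_ineq1 (1 / x) ltac:(lra))).
  rewrite ln_exp in *; lra.
Qed.

Lemma harmonic_tail_ln N m :
  ln (INR (S (N + m))) - ln (INR (S N)) <= fsum (fun j => 1 / INR (S (N + j))) m.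
Proof.
  induction m as [|m IH]; [rewrite Nat.add_0_r; simpl; lra|].
  rewrite fsum_S; replace (S (N + S m)) with (S (S (N + m))) by lia.
  assert (H1 : 1 <= INR (S (N + m))) by (rewrite S_INR; pose proof (pos_INR (N + m)); lra).
  pose proof (ln_succ_le _ H1) as Hstep; rewrite <- S_INR in Hstep; lra.
Qed.

Lemma harmonic_tail_unbounded theta N B :
  0 < theta -> exists m, B <= fsum (fun j => theta / INR (S (N + j))) m.
Proof.
  intros Htheta.
  destruct (INR_unbounded (exp (B / theta + ln (INR (S N))))) as [m Hm].
  exists m; pose proof (harmonic_tail_ln N m) as Hln.
  rewrite (fsum_ext _ (fun j => theta * (1 / INR (S (N + j))) + 0 * 0))
    by (intros; field; apply not_0_INR; lia).
  rewrite fsum_lin.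
  assert (Hlt : INR m < INR (S (N + m))) by (apply lt_INR; lia).
  pose proof (ln_increasing _ _ (exp_pos _) (Rlt_trans _ _ _ Hm Hlt)) as Hlog.
  rewrite ln_exp in Hlog.
  assert (B = theta * (B / theta)) by (field; lra); nra.
Qed.

Definition summable (f : nat -> R) : Prop := exists l, infinite_sum f l.

Lemma isum_ext f g l : (forall n, f n = g n) -> infinite_sum f l -> infinite_sum g l.
Proof. intros Hfg; replace g with f by (apply functional_extensionality; auto); auto. Qed.

Lemma isum_zero : infinite_sum (fun _ => 0) 0.
Proof.
  intros eps Heps; exists O; intros n _; unfold Rdist.
  rewrite sum_eq_R0 by auto; rewrite Rminus_0_r, Rabs_R0; lra.
Qed.

Lemma isum_lin a b f g l1 l2 : infinite_sum f l1 -> infinite_sum g l2 ->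
  infinite_sum (fun n => a * f n + b * g n) (a * l1 + b * l2).
Proof.
  intros Hf Hg.
  assert (Hpart : forall N, sum_f_R0 (fun n => a * f n + b * g n) N
                            = a * sum_f_R0 f N + b * sum_f_R0 g N).
  { induction N as [|N IH]; simpl; [|rewrite IH]; ring. }
  apply (Un_cv_ext (fun N => a * sum_f_R0 f N + b * sum_f_R0 g N)); [intros; auto|].
  apply CV_plus; apply CV_mult; auto; intros eps Heps; exists O; intros;
    unfold Rdist; rewrite Rminus_diag, Rabs_R0; lra.
Qed.

Lemma isum_le f g lf lg :
  infinite_sum f lf -> infinite_sum g lg -> (forall n, f n <= g n) -> lf <= lg.
Proof. intros Hf Hg Hfg; exact (Rle_cv_lim (fun N => sum_Rle f g N (fun n _ => Hfg n)) Hf Hg). Qed.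

Lemma isum_single f n0 : (forall n, n <> n0 -> f n = 0) -> infinite_sum f (f n0).
Proof.
  intros Hf.
  assert (Hpart : forall N, (n0 <= N)%nat -> sum_f_R0 f N = f n0).
  { intros N HN; induction HN as [|N HN IH].
    - destruct n0 as [|n0]; simpl; [reflexivity|].
      rewrite sum_eq_R0; [ring | intros; apply Hf; lia].
    - simpl; rewrite IH, (Hf (S N)) by lia; ring. }
  intros eps Heps; exists n0; intros n Hn.
  rewrite Hpart by lia; unfold Rdist; rewrite Rminus_diag, Rabs_R0; lra.
Qed.

Section EnumeratedSpace.
Variables (X : Type) (e : nat -> option X).
Hypothesis e_enum : is_enum e.
Variable eq_dec : forall x y : X, {x = y} + {x <> y}.

Lemma xsum_spec f l : infinite_sum (lift e f) l -> xsum e f = l.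
Proof.
  intros Hl; unfold xsum; apply (uniqueness_sum (lift e f)); auto.
  apply (epsilon_spec (inhabits 0) (fun l => infinite_sum (lift e f) l)); eauto.
Qed.

Lemma lift_single f y : (forall x, x <> y -> f x = 0) -> infinite_sum (lift e f) (f y).
Proof.
  intros Hf; destruct e_enum as [Hsurj Hinj]; destruct (Hsurj y) as [n0 Hn0].
  replace (f y) with (lift e f n0) by (unfold lift; rewrite Hn0; reflexivity).
  apply isum_single; intros n Hn; unfold lift; destruct (e n) as [x|] eqn:Hx; [|reflexivity].
  apply Hf; intros ->; apply Hn; eapply Hinj; eauto.
Qed.

Lemma vecmat_idm v y : vecmat e v (idm eq_dec) y = v y.
Proof.
  unfold vecmat; apply xsum_spec.
  replace (v y) with (v y * idm eq_dec y y) by (unfold idm; destruct (eq_dec y y); [ring | congruence]).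
  apply (lift_single (fun x => v x * idm eq_dec x y)).
  intros x Hx; unfold idm; destruct (eq_dec x y); [congruence | ring].
Qed.

Lemma vecmat_mat_lin v a b A B y :
  summable (lift e (fun x => v x * A x y)) -> summable (lift e (fun x => v x * B x y)) ->
  vecmat e v (fun x y => a * A x y + b * B x y) y = a * vecmat e v A y + b * vecmat e v B y.
Proof.
  intros [l1 H1] [l2 H2]; unfold vecmat; rewrite (xsum_spec _ l1 H1), (xsum_spec _ l2 H2).
  apply xsum_spec; eapply isum_ext; [|apply (isum_lin a b _ _ _ _ H1 H2)].
  intros n; unfold lift; destruct (e n); ring.
Qed.

Definition mass_vector (v : X -> R) : Prop := (forall x, 0 <= v x) /\ summable (lift e v).

Lemma vecmat_series v A y : mass_vector v -> (forall x, 0 <= A x y <= 1) ->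
  infinite_sum (lift e (fun x => v x * A x y)) (vecmat e v A y).
Proof.
  intros [Hv [m Hm]] HA.
  destruct (Rseries_CV_comp (lift e (fun x => v x * A x y)) (lift e v)) as [l Hl].
  - intros n; unfold lift; destruct (e n) as [x|]; [|lra].
    specialize (Hv x); specialize (HA x); split; nra.
  - exists m; exact Hm.
  - unfold vecmat; rewrite (xsum_spec _ l Hl); exact Hl.
Qed.

Lemma combination_series (c : nat -> R) (u : nat -> X -> R) A y N :
  (forall k, mass_vector (u k)) -> (forall x, 0 <= A x y <= 1) ->
  infinite_sum (lift e (fun x => fsum (fun k => c k * u k x) N * A x y))
               (fsum (fun k => c k * vecmat e (u k) A y) N).
Proof.
  intros Hu HA; induction N as [|N IH]; simpl.
  - eapply isum_ext; [|apply isum_zero]; intros n; unfold lift; destruct (e n); ring.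
  - replace (fsum (fun k => c k * vecmat e (u k) A y) N + c N * vecmat e (u N) A y)
      with (1 * fsum (fun k => c k * vecmat e (u k) A y) N + c N * vecmat e (u N) A y) by ring.
    eapply isum_ext; [|apply (isum_lin 1 (c N) _ _ _ _ IH (vecmat_series (u N) A y (Hu N) HA))].
    intros n; unfold lift; destruct (e n); ring.
Qed.

Lemma vecmat_combination (c : nat -> R) (u : nat -> X -> R) A y N :
  (forall k, mass_vector (u k)) -> (forall x, 0 <= A x y <= 1) ->
  vecmat e (fun x => fsum (fun k => c k * u k x) N) A y = fsum (fun k => c k * vecmat e (u k) A y) N.
Proof. intros Hu HA; apply xsum_spec, combination_series; auto. Qed.

Section Stochastic.
Variable P : X -> X -> R.
Hypothesis P_nonneg : forall x y, 0 <= P x y.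
Hypothesis P_rows : forall x, infinite_sum (lift e (P x)) 1.

Lemma lift_nonneg f : (forall x, 0 <= f x) -> forall n, 0 <= lift e f n.
Proof. intros Hf n; unfold lift; destruct (e n); [apply Hf | lra]. Qed.

Lemma stochastic_entry x y : 0 <= P x y <= 1.
Proof.
  split; [apply P_nonneg|]; destruct e_enum as [Hsurj _]; destruct (Hsurj y) as [n0 Hn0].
  replace (P x y) with (lift e (P x) n0) by (unfold lift; rewrite Hn0; reflexivity).
  eapply Rle_trans; [|apply (sum_incr _ n0 _ (P_rows x) (lift_nonneg _ (P_nonneg x)))].
  destruct n0; simpl; [lra|].
  pose proof (cond_pos_sum _ n0 (lift_nonneg _ (P_nonneg x))); lra.
Qed.

(* [v^t P] has finite mass, at most that of [v]: summing a finite set of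
   columns commutes with the series over the rows. *)
Lemma vecmat_mass v : mass_vector v -> mass_vector (vecmat e v P).
Proof.
  intros [Hv_nn [m Hm]].
  assert (Hcol : forall y, infinite_sum (lift e (fun x => v x * P x y)) (vecmat e v P y))
    by (intros y; apply vecmat_series; [split; [|exists m]; auto | intros; apply stochastic_entry]).
  assert (Hlift : forall n, infinite_sum (lift e (fun x => v x * lift e (P x) n))
                                         (lift e (vecmat e v P) n)).
  { intros n; destruct (e n) as [y|] eqn:Hy.
    - replace (lift e (vecmat e v P) n) with (vecmat e v P y) by (unfold lift; rewrite Hy; reflexivity).
      eapply isum_ext; [|apply (Hcol y)]; intros k; unfold lift; rewrite Hy; reflexivity.
    - replace (lift e (vecmat e v P) n) with 0 by (unfold lift; rewrite Hy; reflexivity).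
      eapply isum_ext; [|apply isum_zero]; intros k; unfold lift; rewrite Hy.
      destruct (e k); ring. }
  assert (Hpart : forall N, infinite_sum (lift e (fun x => v x * sum_f_R0 (lift e (P x)) N))
                                         (sum_f_R0 (lift e (vecmat e v P)) N)).
  { induction N as [|N IH]; simpl; [apply Hlift|].
    replace (sum_f_R0 (lift e (vecmat e v P)) N + lift e (vecmat e v P) (S N))
      with (1 * sum_f_R0 (lift e (vecmat e v P)) N + 1 * lift e (vecmat e v P) (S N)) by ring.
    eapply isum_ext; [|apply (isum_lin 1 1 _ _ _ _ IH (Hlift (S N)))].
    intros n; unfold lift; destruct (e n); ring. }
  assert (Hbound : forall N, sum_f_R0 (lift e (vecmat e v P)) N <= m).
  { intros N; apply (isum_le _ _ _ _ (Hpart N) Hm); intros n; unfold lift.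
    destruct (e n) as [x|]; [|lra].
    pose proof (sum_incr _ N _ (P_rows x) (lift_nonneg _ (P_nonneg x))).
    pose proof (Hv_nn x); unfold lift in *; nra. }
  assert (Hnn : forall y, 0 <= vecmat e v P y).
  { intros y; apply (isum_le _ _ _ _ isum_zero (Hcol y)); intros n; unfold lift.
    destruct (e n) as [x|]; [pose proof (Hv_nn x); pose proof (P_nonneg x y); nra | lra]. }
  split; [exact Hnn|].
  assert (Hgrow : Un_growing (sum_f_R0 (lift e (vecmat e v P)))).
  { intros n; simpl; pose proof (lift_nonneg _ Hnn (S n)); lra. }
  destruct (growing_cv _ Hgrow) as [l Hl]; [|exists l; exact Hl].
  exists m; intros r [N ->]; apply Hbound.
Qed.

Lemma vpow_mass v k : mass_vector v -> mass_vector (vpow e v P k).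
Proof. intros Hv; induction k as [|k IH]; [exact Hv | apply vecmat_mass, IH]. Qed.

Lemma vprod_mixture (a : nat -> R) (K : nat -> X -> X -> R) v :
  (forall n x y, K n x y = (1 - a n) * idm eq_dec x y + a n * P x y) ->
  mass_vector v ->
  forall n y, vprod e v K n y = fsum (fun k => wgt a n k * vpow e v P k y) (S n).
Proof.
  intros HK Hv n; induction n as [|n IH]; intros y; [simpl; ring|].
  set (u := vpow e v P) in *.
  assert (Hu : forall k, mass_vector (u k)) by (intros; apply vpow_mass, Hv).
  assert (HI : forall x, 0 <= idm eq_dec x y <= 1) by (intros x; unfold idm; destruct (eq_dec x y); lra).
  simpl vprod.
  replace (vprod e v K n) with (fun x => fsum (fun k => wgt a n k * u k x) (S n))
    by (apply functional_extensionality; intros; rewrite IH; reflexivity).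
  replace (K (S n)) with (fun x y => (1 - a (S n)) * idm eq_dec x y + a (S n) * P x y)
    by (do 2 (apply functional_extensionality; intros); rewrite HK; reflexivity).
  rewrite vecmat_mat_lin by (eexists; apply combination_series; auto; intros; apply stochastic_entry).
  rewrite vecmat_idm, vecmat_combination by (auto; intros; apply stochastic_entry).
  rewrite fsum_wgt_S; reflexivity.
Qed.

End Stochastic.
End EnumeratedSpace.

Definition uniformized {X : Type} (eq_dec : forall x y : X, {x = y} + {x <> y})
  (G : X -> X -> R) (theta : R) : X -> X -> R :=
  fun x y => idm eq_dec x y + G x y / theta.

Definition step_size (M : nat) (theta : R) (n : nat) : R :=
  if Nat.ltb M n then theta / INR n else 0.

(* The rows of [Q] sum to one because those of [G] sum to zero. *)
Lemma uniformized_rows {X : Type} (e : nat -> option X)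
  (eq_dec : forall x y : X, {x = y} + {x <> y}) (G : X -> X -> R) theta :
  is_enum e -> is_generator e eq_dec G -> 0 < theta ->
  forall x, infinite_sum (lift e (uniformized eq_dec G theta x)) 1.
Proof.
  intros He [_ [Hrow _]] Htheta x.
  assert (Hid : infinite_sum (lift e (idm eq_dec x)) 1).
  { pose proof (lift_single X e He (idm eq_dec x) x) as Hs.
    replace 1 with (idm eq_dec x x) by (unfold idm; destruct (eq_dec x x); congruence).
    apply Hs; intros y Hy; unfold idm; destruct (eq_dec x y); congruence. }
  replace 1 with ((1 + G x x / theta) * 1 + 1 / theta * - G x x) by (field; lra).
  eapply isum_ext; [|apply (isum_lin _ _ _ _ _ _ Hid (Hrow x))].
  intros n; unfold lift, uniformized, idm; destruct (e n) as [y|]; [|ring].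
  destruct (eq_dec x y); [subst|]; field; lra.
Qed.

Lemma Kmat_convex {X : Type} (eq_dec : forall x y : X, {x = y} + {x <> y})
  (G : X -> X -> R) theta M : 0 < theta ->
  forall n x y, Kmat eq_dec G M n x y
    = (1 - step_size M theta n) * idm eq_dec x y
      + step_size M theta n * uniformized eq_dec G theta x y.
Proof.
  intros Htheta n x y; unfold Kmat, step_size, uniformized.
  destruct (Nat.ltb_spec M n) as [HMn|HMn]; [|ring].
  assert (INR n <> 0) by (apply not_0_INR; lia); field; lra.
Qed.

Lemma step_size_schedule M theta : 0 < theta ->
  exists N0,
    (forall n, (N0 <= n)%nat -> 0 <= step_size M theta (S n) <= 1) /\
    (forall N, (N0 <= N)%nat -> forall B,
       exists m, B <= fsum (fun j => step_size M theta (S (N + j))) m).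
Proof.
  intros Htheta; destruct (INR_unbounded theta) as [K0 HK0].
  exists (Nat.max M K0); split.
  - intros n Hn; unfold step_size.
    destruct (Nat.ltb_spec M (S n)) as [_|]; [|lia].
    assert (INR K0 <= INR (S n)) by (apply le_INR; lia).
    split; [apply Rlt_le, Rdiv_lt_0_compat; lra|].
    apply (Rmult_le_reg_r (INR (S n))); [lra|]; field_simplify; lra.
  - intros N HN B; destruct (harmonic_tail_unbounded theta N B Htheta) as [m Hm].
    exists m; rewrite (fsum_ext _ (fun j => theta / INR (S (N + j)))); [exact Hm|].
    intros j _; unfold step_size; destruct (Nat.ltb_spec M (S (N + j))); [reflexivity | lia].
Qed.

Theorem mainTheorem14 (X : Type) (e : nat -> option X)
  (eq_dec : forall x y : X, {x = y} + {x <> y})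
  (G : X -> X -> R) (theta : R) (M : nat) (pi mu : X -> R) :
  is_enum e ->
  is_generator e eq_dec G ->
  0 < theta ->
  (1 <= M)%nat ->
  (forall x y, 0 <= idm eq_dec x y + G x y / theta) ->
  (forall x y, 0 <= idm eq_dec x y + G x y / INR M) ->
  is_prob_vector e pi ->
  is_stationary e (fun x y => idm eq_dec x y + G x y / theta) mu ->
  (forall y, Un_cv (fun n => vpow e pi (fun x y => idm eq_dec x y + G x y / theta) n y) (mu y)) ->
  (forall y, Un_cv (fun n => vprod e pi (Kmat eq_dec G M) n y) (mu y)) /\
  (forall y, Un_cv (fun n => vecmat e (vprod e pi (Kmat eq_dec G M) n)
                               (fun x y => idm eq_dec x y + G x y / theta) y) (mu y)).
Proof.
  intros He Hgen Htheta _ HQ_nonneg _ [Hpi_nonneg Hpi_sum] _ HQ_cv.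
  change (fun x y => idm eq_dec x y + G x y / theta) with (uniformized eq_dec G theta) in *.
  set (Q := uniformized eq_dec G theta) in *.
  pose proof (uniformized_rows e eq_dec G theta He Hgen Htheta) as HQ_rows.
  set (a := step_size M theta).
  destruct (step_size_schedule M theta Htheta) as [N0 [Ha_unit Ha_div]].
  destruct (wgt_l1_bound a N0 Ha_unit) as [C HC].
  pose proof (wgt_vanishes a N0 Ha_unit Ha_div) as Hcol.
  assert (Hmix : forall n, vprod e pi (Kmat eq_dec G M) n
                   = fun y => fsum (fun k => wgt a n k * vpow e pi Q k y) (S n)).
  { intros n; apply functional_extensionality; intros y.
    apply (vprod_mixture X e He eq_dec Q HQ_nonneg HQ_rows a);
      [apply Kmat_convex, Htheta | split; [|exists 1]; auto]. }
  assert (Hmass : forall k, mass_vector X e (vpow e pi Q k))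
    by (intros; apply vpow_mass; auto; split; [|exists 1]; auto).
  split; intros y.
  - apply (Un_cv_ext (fun n => fsum (fun k => wgt a n k * vpow e pi Q k y) (S n)));
      [intros n; rewrite Hmix; reflexivity|].
    apply (toeplitz (wgt a) C); auto using wgt_sum.
  - apply (Un_cv_ext (fun n => fsum (fun k => wgt a n k * vpow e pi Q (S k) y) (S n))).
    { intros n; rewrite Hmix; symmetry.
      apply vecmat_combination; auto; intros; apply (stochastic_entry X e He Q); auto. }
    apply (toeplitz (wgt a) C); auto using wgt_sum.
    apply (Un_cv_ext (fun k => vpow e pi Q (k + 1) y)); [intros k; rewrite Nat.add_1_r; reflexivity|].
    exact (CV_shift' (fun k => vpow e pi Q k y) 1 (mu y) (HQ_cv y)).
Qed.
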